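(* Let $L\ge1$ and let $\pi_L:\mathfrak{OA}\to\mathfrak{OA}_{1,L}=\mathfrak{OA}/\mathfrak I_{(t-1)^L}$ be the projection. There are unique elements $\underline X_k,\underline Y_k\in\mathfrak{OA}_{1,L}$ ($0\le k<L$) such that for all $m\in\mathbb Z$ $$\pi_L(A_m)=\sum_{k=0}^{L-1}\binom mk\underline X_k,\qquad \pi_L(G_m)=\sum_{k=0}^{L-1}(-1)^k\binom mk\underline Y_k .$$ Moreover $\underline Y_k=\frac{(-1)^k}{4}[\underline X_k,\underline X_0]$ for $0\le k<L$.
   Context: Work over $\mathbb C$. $\mathfrak{sl}_2$ has basis $e,f,h$ with $[e,f]=h$, $[h,e]=2e$, $[h,f]=-2f$. $L(\mathfrak{sl}_2)=\mathbb C[t,t^{-1}]\otimes\mathfrak{sl}_2$ is the loop algebra with bracket $[p(t)x,q(t)y]=p(t)q(t)[x,y]$. The Onsager algebra is the Lie subalgebra $\mathfrak{OA}=\{p(t)e+p(t^{-1})f+q(t)h:\ p,q\in\mathbb C[t,t^{-1}],\ q(t^{-1})=-q(t)\}$ of $L(\mathfrak{sl}_2)$, spanned by $A_m=2t^me+2t^{-m}f$ and $G_m=(t^m-t^{-m})h$, $m\in\mathbb Z$. $\mathfrak I_{(t-1)^L}=\{p(t)e+p(t^{-1})f+q(t)h\in\mathfrak{OA}: p,q\in(t-1)^L\mathbb C[t,t^{-1}]\}$. For $m\in\mathbb Z$, $k\ge0$: $\binom mk=m(m-1)\cdots(m-k+1)/k!$, $\binom m0=1$. *)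

From mathcomp Require Import all_boot all_order all_algebra.
From mathcomp Require Import reals Rstruct.
From mathcomp.real_closed Require Import complex.
Set Implicit Arguments. Unset Strict Implicit. Unset Printing Implicit Defensive.
Import Order.TTheory GRing.Theory Num.Theory.
Local Open Scope ring_scope.

Definition C : fieldType := (Rdefinitions.R)[i].

(* ---------- Laurent polynomials C[t,t^-1] ----------
   A pair (a, n) with a : {poly C}, n : nat represents a(t) * t^(-n).
   Equality of Laurent polynomials is the relation [leqv] below. *)
Definition laurent := ({poly C} * nat)%type.

Definition leqv (x y : laurent) : Prop := x.1 * 'X^(y.2) = y.1 * 'X^(x.2).
Definition lzero : laurent := (0, 0%N).
Definition ladd (x y : laurent) : laurent :=
  (x.1 * 'X^(y.2) + y.1 * 'X^(x.2), (x.2 + y.2)%N).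
Definition lopp (x : laurent) : laurent := (- x.1, x.2).
Definition lmul (x y : laurent) : laurent := (x.1 * y.1, (x.2 + y.2)%N).
Definition lscale (c : C) (x : laurent) : laurent := (c *: x.1, x.2).
Definition lmon (k : int) : laurent :=
  match k with Posz n => ('X^n, 0%N) | Negz n => (1, n.+1) end.
(* p(t) |-> p(t^-1):  a(t) t^-n |-> sum_i a_i t^(n-i) *)
Definition linv (x : laurent) : laurent :=
  (\sum_(i < size x.1) x.1`_i *: 'X^(size x.1 - i + x.2), size x.1).
Definition in_tm1_ideal (L : nat) (x : laurent) : Prop :=
  exists r : laurent, leqv x (lmul (('X - 1) ^+ L, 0%N) r).

(* ---------- the loop algebra L(sl2) = C[t,t^-1] (x) sl2 ----------
   An element is  le * e + lf * f + lh * h. *)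
Record loop := Loop { le : laurent; lf : laurent; lh : laurent }.

Definition loop0 : loop := Loop lzero lzero lzero.
Definition loop_add (x y : loop) : loop :=
  Loop (ladd (le x) (le y)) (ladd (lf x) (lf y)) (ladd (lh x) (lh y)).
Definition loop_opp (x : loop) : loop := Loop (lopp (le x)) (lopp (lf x)) (lopp (lh x)).
Definition loop_scale (c : C) (x : loop) : loop :=
  Loop (lscale c (le x)) (lscale c (lf x)) (lscale c (lh x)).
(* Lie bracket [p x, q y] = p q [x,y] with [e,f]=h, [h,e]=2e, [h,f]=-2f:
   [x,y] = 2(x_h y_e - x_e y_h) e + 2(x_f y_h - x_h y_f) f + (x_e y_f - x_f y_e) h *)
Definition loop_bracket (x y : loop) : loop :=
  Loop (lscale 2 (ladd (lmul (lh x) (le y)) (lopp (lmul (le x) (lh y)))))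
       (lscale 2 (ladd (lmul (lf x) (lh y)) (lopp (lmul (lh x) (lf y)))))
       (ladd (lmul (le x) (lf y)) (lopp (lmul (lf x) (le y)))).
Definition loop_sum (n : nat) (F : nat -> loop) : loop :=
  foldr loop_add loop0 (map F (iota 0 n)).

(* x = p(t) e + p(t^-1) f + q(t) h  with q(t^-1) = -q(t) *)
Definition inOA (x : loop) : Prop :=
  leqv (lf x) (linv (le x)) /\ leqv (linv (lh x)) (lopp (lh x)).
Definition inI (L : nat) (x : loop) : Prop :=
  inOA x /\ in_tm1_ideal L (le x) /\ in_tm1_ideal L (lh x).
(* x and y have the same image in OA_{1,L} = OA / I_{(t-1)^L} *)
Definition congI (L : nat) (x y : loop) : Prop := inI L (loop_add x (loop_opp y)).

Definition A_ (m : int) : loop :=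
  Loop (lscale 2 (lmon m)) (lscale 2 (lmon (- m))) lzero.
Definition G_ (m : int) : loop :=
  Loop lzero lzero (ladd (lmon m) (lopp (lmon (- m)))).

Definition binomZ (m : int) (k : nat) : C :=
  (\prod_(i < k) (m - i%:Z)%:~R) / (k`!)%:R.

(* X, Y : families of representatives (in OA) of elements of OA_{1,L}
   satisfying pi_L(A_m) = sum_k binom(m,k) X_k and
   pi_L(G_m) = sum_k (-1)^k binom(m,k) Y_k for all m. *)
Definition expansion (L : nat) (X Y : nat -> loop) : Prop :=
  (forall k, (k < L)%N -> inOA (X k) /\ inOA (Y k)) /\
  (forall m : int,
     congI L (A_ m) (loop_sum L (fun k => loop_scale (binomZ m k) (X k))) /\
     congI L (G_ m) (loop_sum L (fun k => loop_scale ((-1) ^+ k * binomZ m k) (Y k)))).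

(* We compute in the fraction field K = C(t), reading a Laurent polynomial x
   both as x(t) and as x(t^-1): membership in OA, in I_{(t-1)^L} and congruence
   modulo I_{(t-1)^L} then become identities in K, in which (t-1)^L C[t,t^-1]
   is an ideal of the subring C[t,t^-1].
   The key identity is the truncated binomial series
     t^m = sum_(k<L) binom(m,k) (t-1)^k   modulo (t-1)^L C[t,t^-1],
   valid for every m in Z by induction on m in both directions, via Pascal's
   rule and the invertibility of t.  It shows that
     X_k = 2 (t-1)^k e + 2 (t^-1-1)^k f,  Y_k = (-1)^k ((t-1)^k - (t^-1-1)^k) h
   satisfy the expansions.  They are unique because the matrix
   (binom(m,k))_(m,k<L) is unitriangular, and Y_k = (-1)^k/4 [X_k, X_0] holds on
   the nose for these representatives; since I_{(t-1)^L} is an ideal of OA it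
   holds modulo I_{(t-1)^L} for any others. *)

From mathcomp Require Import all_boot all_order all_algebra fraction ring.
From mathcomp Require Import Rstruct.
From mathcomp.real_closed Require Import complex.
Set Implicit Arguments. Unset Strict Implicit. Unset Printing Implicit Defensive.
Import GRing.Theory.
Local Open Scope ring_scope.

Definition K := {fraction {poly C}}.
Definition tofracK : {rmorphism {poly C} -> K} := @FracField.tofrac _.
Definition constK : {rmorphism C -> K} := tofracK \o polyC.
Definition tX : K := tofracK 'X.

Lemma constK_comm (z : K) : commr_rmorph constK z.
Proof. by move=> a; rewrite /GRing.comm mulrC. Qed.

Definition evalK (z : K) : {rmorphism {poly C} -> K} := horner_morph (constK_comm z).

Lemma evalK_tX p : evalK tX p = tofracK p.
Proof. by rewrite (poly_initial tofracK p). Qed.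

Lemma evalKE z p : evalK z p = \sum_(i < size p) constK p`_i * z ^+ i.
Proof.
rewrite /= /horner_morph horner_coef size_map_inj_poly ?rmorph0 //; last exact: fmorph_inj.
by apply: eq_bigr => i _; rewrite coef_map.
Qed.

Lemma evalKX z : evalK z 'X = z. Proof. exact: horner_morphX. Qed.
Lemma evalKC z c : evalK z c%:P = constK c. Proof. exact: horner_morphC. Qed.

Lemma evalK_scaleXn z c k : evalK z (c *: 'X^k) = constK c * z ^+ k.
Proof. by rewrite -mul_polyC rmorphM rmorphXn evalKC evalKX. Qed.

Lemma tofracK_inj : injective tofracK.
Proof. by move=> p q h; apply/eqP; rewrite -tofrac_eq; apply/eqP. Qed.

Lemma tX_neq0 : tX != 0.
Proof. by rewrite /tX /= tofrac_eq0 polyX_eq0. Qed.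

Lemma tXn_neq0 n : tX ^+ n != 0.
Proof. by rewrite expf_neq0 // tX_neq0. Qed.

Section PowersOfUnit.
Variables (F : fieldType) (X : F).
Hypothesis X_neq0 : X != 0.

Let Xn_neq0 n : X ^+ n != 0. Proof. by rewrite expf_neq0. Qed.

Lemma mulr_expD_addV (a b : F) (m n : nat) :
  X ^+ (m + n) * (a * X^-1 ^+ n + b * X^-1 ^+ m) = X ^+ m * a + X ^+ n * b.
Proof. by rewrite !exprVn exprD; field; rewrite !Xn_neq0. Qed.

Lemma mulr_expV_subn (c : F) (s n i : nat) : (i <= s)%N ->
  c * X ^+ (s - i + n) / X ^+ s = X ^+ n * (c * X^-1 ^+ i).
Proof.
move/subnK; move: (s - i)%N => k <-.
by rewrite !exprD exprVn; field; rewrite !Xn_neq0.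
Qed.

Lemma mulr_exp_subnV (c : F) (s n i : nat) : (i <= s)%N ->
  X ^+ s * (c * X^-1 ^+ (s - i + n)) = c * X ^+ i / X ^+ n.
Proof.
move/subnK; move: (s - i)%N => k <-.
by rewrite !exprD !exprVn; field; rewrite !Xn_neq0.
Qed.

Lemma eq_mulr_expV (a b : F) (m n : nat) :
  a * X^-1 ^+ n = b * X^-1 ^+ m -> X ^+ m * a = X ^+ n * b.
Proof.
move=> h; have -> : a = a * X^-1 ^+ n * X ^+ n by rewrite exprVn mulfVK.
by rewrite h exprVn; field; rewrite !Xn_neq0.
Qed.

End PowersOfUnit.

(* [lval x] and [lvalV x] are the values x(t) and x(t^-1) in K = C(t). *)
Definition lval (x : laurent) : K := tofracK x.1 / tX ^+ x.2.
Definition lvalV (x : laurent) : K := tX ^+ x.2 * evalK tX^-1 x.1.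

Lemma leqv_lval x y : leqv x y <-> lval x = lval y.
Proof.
rewrite /leqv /lval; split=> [h | /eqP].
  by apply/eqP; rewrite eqr_div ?tXn_neq0 // -!rmorphXn -!rmorphM h.
by rewrite eqr_div ?tXn_neq0 // -!rmorphXn -!rmorphM => /eqP /tofracK_inj.
Qed.

Lemma lvalD x y : lval (ladd x y) = lval x + lval y.
Proof.
by rewrite /lval /= addf_div ?tXn_neq0 // rmorphD !rmorphM !rmorphXn exprD.
Qed.
Lemma lvalN x : lval (lopp x) = - lval x.
Proof. by rewrite /lval /= rmorphN mulNr. Qed.
Lemma lvalM x y : lval (lmul x y) = lval x * lval y.
Proof. by rewrite /lval /= rmorphM exprD invfM mulrACA. Qed.
Lemma lvalZ c x : lval (lscale c x) = constK c * lval x.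
Proof. by rewrite /lval /= -mul_polyC rmorphM mulrA. Qed.
Lemma lval0 : lval lzero = 0.
Proof. by rewrite /lval /= rmorph0 mul0r. Qed.
Lemma lval_mon m : lval (lmon m) = tX ^ m.
Proof. by case: m => n; rewrite /lval /= ?expr0 ?invr1 ?mulr1 ?rmorphXn // rmorph1 mul1r. Qed.
Lemma lval_poly p : lval (p, 0%N) = tofracK p.
Proof. by rewrite /lval /= expr0 invr1 mulr1. Qed.

Lemma lvalVD x y : lvalV (ladd x y) = lvalV x + lvalV y.
Proof.
by rewrite /lvalV /= rmorphD !rmorphM !rmorphXn !evalKX mulr_expD_addV ?tX_neq0.
Qed.
Lemma lvalVN x : lvalV (lopp x) = - lvalV x.
Proof. by rewrite /lvalV /= rmorphN mulrN. Qed.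
Lemma lvalVM x y : lvalV (lmul x y) = lvalV x * lvalV y.
Proof. by rewrite /lvalV /= rmorphM exprD mulrACA. Qed.
Lemma lvalVZ c x : lvalV (lscale c x) = constK c * lvalV x.
Proof. by rewrite /lvalV /= -mul_polyC rmorphM evalKC mulrCA. Qed.
Lemma lvalV0 : lvalV lzero = 0.
Proof. by rewrite /lvalV /= rmorph0 mulr0. Qed.
Lemma lvalV_mon m : lvalV (lmon m) = tX ^ (- m).
Proof.
case: m => n; rewrite /lvalV /=; last by rewrite rmorph1 mulr1 NegzE opprK.
by rewrite expr0 mul1r rmorphXn evalKX -exprz_inv.
Qed.
Lemma lvalV_poly p : lvalV (p, 0%N) = evalK tX^-1 p.
Proof. by rewrite /lvalV /= expr0 mul1r. Qed.

Lemma lval_linv x : lval (linv x) = lvalV x.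
Proof.
rewrite /lval /lvalV /linv /= rmorph_sum mulr_suml evalKE mulr_sumr.
apply: eq_bigr => i _; rewrite -evalK_tX evalK_scaleXn.
by rewrite mulr_expV_subn ?tX_neq0 // ltnW.
Qed.

Lemma lvalV_linv x : lvalV (linv x) = lval x.
Proof.
rewrite /lval /lvalV /linv /= rmorph_sum mulr_sumr -evalK_tX evalKE mulr_suml.
apply: eq_bigr => i _; rewrite evalK_scaleXn.
by rewrite mulr_exp_subnV ?tX_neq0 // ltnW.
Qed.

Lemma lvalV_leqv x y : leqv x y -> lvalV x = lvalV y.
Proof.
rewrite /leqv /lvalV => /(congr1 (evalK tX^-1)).
by rewrite !rmorphM !rmorphXn !evalKX; move/(eq_mulr_expV tX_neq0).
Qed.

Definition laurentK (u : K) : Prop := exists x, u = lval x.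

Lemma laurentK_lval x : laurentK (lval x). Proof. by exists x. Qed.
Lemma laurentK_lvalV x : laurentK (lvalV x).
Proof. by exists (linv x); rewrite lval_linv. Qed.
Lemma laurentKD u v : laurentK u -> laurentK v -> laurentK (u + v).
Proof. by move=> [a ->] [b ->]; exists (ladd a b); rewrite lvalD. Qed.
Lemma laurentKN u : laurentK u -> laurentK (- u).
Proof. by move=> [a ->]; exists (lopp a); rewrite lvalN. Qed.
Lemma laurentKM u v : laurentK u -> laurentK v -> laurentK (u * v).
Proof. by move=> [a ->] [b ->]; exists (lmul a b); rewrite lvalM. Qed.
Lemma laurentK_const c : laurentK (constK c).
Proof. by exists (c%:P, 0%N); rewrite lval_poly. Qed.
Lemma laurentKX u n : laurentK u -> laurentK (u ^+ n).
Proof.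
move=> hu; elim: n => [|n IH]; last by rewrite exprS; apply: laurentKM.
by rewrite expr0 -(rmorph1 constK); apply: laurentK_const.
Qed.
Lemma laurentK_tX : laurentK tX.
Proof. by exists (lmon 1); rewrite lval_mon. Qed.
Lemma laurentK_tXV : laurentK tX^-1.
Proof. by exists (lmon (-1)); rewrite lval_mon exprN1. Qed.

Definition tm1 (k : nat) : laurent := (('X - 1) ^+ k, 0%N).

Lemma lval_tm1 k : lval (tm1 k) = (tX - 1) ^+ k.
Proof. by rewrite lval_poly rmorphXn rmorphB rmorph1. Qed.
Lemma lvalV_tm1 k : lvalV (tm1 k) = (tX^-1 - 1) ^+ k.
Proof. by rewrite lvalV_poly rmorphXn rmorphB rmorph1 evalKX. Qed.

Section Ideal.
Variable L : nat.

Definition tm1_idealK (u : K) : Prop := exists2 v, laurentK v & u = (tX - 1) ^+ L * v.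

Lemma tm1_idealK_lval x : in_tm1_ideal L x <-> tm1_idealK (lval x).
Proof.
split=> [[r /leqv_lval ->] | [v [r ->] h]].
  by exists (lval r); [apply: laurentK_lval | rewrite lvalM lval_tm1].
by exists r; apply/leqv_lval; rewrite lvalM lval_tm1.
Qed.

Lemma tm1_idealK0 : tm1_idealK 0.
Proof. by exists 0; [rewrite -(rmorph0 constK); apply: laurentK_const | rewrite mulr0]. Qed.
Lemma tm1_idealKD u v : tm1_idealK u -> tm1_idealK v -> tm1_idealK (u + v).
Proof. by move=> [a ha ->] [b hb ->]; exists (a + b); [apply: laurentKD | rewrite mulrDr]. Qed.
Lemma tm1_idealKN u : tm1_idealK u -> tm1_idealK (- u).
Proof. by move=> [a ha ->]; exists (- a); [apply: laurentKN | rewrite mulrN]. Qed.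
Lemma tm1_idealKB u v : tm1_idealK u -> tm1_idealK v -> tm1_idealK (u - v).
Proof. by move=> hu hv; apply/tm1_idealKD/tm1_idealKN. Qed.
Lemma tm1_idealKMr u v : tm1_idealK u -> laurentK v -> tm1_idealK (u * v).
Proof. by move=> [a ha ->] hv; exists (a * v); [apply: laurentKM | rewrite mulrA]. Qed.
Lemma tm1_idealKMl u v : laurentK v -> tm1_idealK u -> tm1_idealK (v * u).
Proof. by move=> hv hu; rewrite mulrC; apply: tm1_idealKMr. Qed.
Lemma tm1_idealK_sum (I : Type) (r : seq I) (P : pred I) (F : I -> K) :
  (forall i, P i -> tm1_idealK (F i)) -> tm1_idealK (\sum_(i <- r | P i) F i).
Proof. by move=> h; apply: (big_ind tm1_idealK) => //; [apply: tm1_idealK0 | apply: tm1_idealKD]. Qed.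

Lemma tm1_idealK_gen : tm1_idealK ((tX - 1) ^+ L).
Proof. by exists 1; [rewrite -(rmorph1 constK); apply: laurentK_const | rewrite mulr1]. Qed.

Lemma tm1_idealK_genV : tm1_idealK ((tX^-1 - 1) ^+ L).
Proof.
have -> : tX^-1 - 1 = (tX - 1) * (- tX^-1) by rewrite mulrN mulrBl divff ?tX_neq0 // mul1r opprB.
rewrite exprMn; apply: tm1_idealKMr; first exact: tm1_idealK_gen.
by apply/laurentKX/laurentKN/laurentK_tXV.
Qed.

(* The ideal is stable under t |-> t^-1 because its generator is, up to a unit. *)
Lemma tm1_idealK_lvalV x : tm1_idealK (lval x) -> tm1_idealK (lvalV x).
Proof.
move=> /tm1_idealK_lval [r /lvalV_leqv ->]; rewrite lvalVM lvalV_tm1.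
by apply: tm1_idealKMr; [apply: tm1_idealK_genV | apply: laurentK_lvalV].
Qed.

End Ideal.

Lemma natC_neq0 n : (n.+1%:R : C) != 0.
Proof. by have -> : (n.+1%:R : C) = (n.+1%:R : (Rdefinitions.R)[i]) by []; rewrite Num.Theory.pnatr_eq0. Qed.

Lemma factC_neq0 n : ((n`!)%:R : C) != 0.
Proof. by move: (fact_gt0 n); case: (n`!) => // k _; apply: natC_neq0. Qed.

Definition ffactZ (m : int) (k : nat) : C := \prod_(i < k) (m - i%:Z)%:~R.

Lemma ffactZ_addS m k : ffactZ (m + 1) k.+1 = (m + 1)%:~R * ffactZ m k.
Proof.
rewrite /ffactZ big_ord_recl /= subr0; congr (_ * _); apply: eq_bigr => i _.
by rewrite /bump /= add1n intS; congr (_%:~R); ring.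
Qed.

Lemma ffactZ_diag (k : nat) : ffactZ k k = (k`!)%:R.
Proof.
elim: k => [|k IH]; first by rewrite /ffactZ big_ord0 fact0.
have -> : (k.+1 : int) = k%:Z + 1 by rewrite intS addrC.
by rewrite ffactZ_addS IH factS natrM mulrC addrC -intS mulrC.
Qed.

Lemma binomZ0 m : binomZ m 0 = 1.
Proof. by rewrite /binomZ big_ord0 fact0 divr1. Qed.

Lemma binomZ0S k : binomZ 0 k.+1 = 0.
Proof. by rewrite /binomZ big_ord_recl /= subr0 !mul0r. Qed.

Lemma binomZS m k : binomZ (m + 1) k.+1 = binomZ m k.+1 + binomZ m k.
Proof.
rewrite /binomZ -!/(ffactZ _ _) ffactZ_addS /ffactZ big_ord_recr /= -/(ffactZ m k).
have -> : (m + 1)%:~R = (m - k%:Z)%:~R + k.+1%:R :> C.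
  by rewrite pmulrn -rmorphD; congr (_%:~R); rewrite intS; ring.
by rewrite factS natrM; field; rewrite factC_neq0 addrC natr1 natC_neq0.
Qed.

Lemma binomZ_diag (k : nat) : binomZ k k = 1.
Proof. by rewrite /binomZ -/(ffactZ _ _) ffactZ_diag divff ?factC_neq0. Qed.

Lemma binomZ_small (k j : nat) : (k < j)%N -> binomZ k j = 0.
Proof.
move=> hkj; apply/eqP; rewrite mulf_eq0 prodf_seq_eq0; apply/orP; left.
by apply/hasP; exists (Ordinal hkj); rewrite ?mem_index_enum //= subrr.
Qed.

Section BinomialSeries.
Variable n : nat.
Local Notation L := n.+1.

Definition binom_series (u : K) (m : int) : K :=
  \sum_(k < L) constK (binomZ m k) * (u - 1) ^+ k.

Definition binom_rem (u : K) (m : int) : K := u ^ m - binom_series u m.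

Lemma binom_rem0 u : binom_rem u 0 = 0.
Proof.
rewrite /binom_rem /binom_series big_ord_recl binomZ0 rmorph1 mul1r expr0 expr0z big1 ?addr0 ?subrr //.
by move=> i _; rewrite lift0 binomZ0S rmorph0 mul0r.
Qed.

(* Multiplying the truncated series by u = 1 + (u - 1) and using Pascal's rule
   reproduces the series for m + 1, up to the overflowing term of degree L. *)
Lemma binom_remS u m : u != 0 ->
  binom_rem u (m + 1) = u * binom_rem u m + constK (binomZ m n) * (u - 1) ^+ L.
Proof.
move=> u_neq0.
set A := \sum_(k < n) constK (binomZ m k.+1) * (u - 1) ^+ k.+1.
set B := \sum_(k < n) constK (binomZ m k) * (u - 1) ^+ k.+1.
have series_m : binom_series u m = 1 + A.
  by rewrite /binom_series big_ord_recl binomZ0 rmorph1 mul1r expr0.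
have series_mS : binom_series u (m + 1) = 1 + (A + B).
  rewrite /binom_series big_ord_recl binomZ0 rmorph1 mul1r expr0 -big_split.
  by congr (_ + _); apply: eq_bigr => i _; rewrite lift0 binomZS rmorphD mulrDl.
have shift : (u - 1) * binom_series u m = B + constK (binomZ m n) * (u - 1) ^+ L.
  rewrite /binom_series mulr_sumr big_ord_recr /=; congr (_ + _).
    by apply: eq_bigr => i _; rewrite mulrCA exprS.
  by rewrite mulrCA exprS.
rewrite /binom_rem series_mS exprzDr ?unitfE // expr1z.
have -> : B = (u - 1) * (1 + A) - constK (binomZ m n) * (u - 1) ^+ L.
  by rewrite -series_m shift addrK.
by rewrite series_m; ring.
Qed.

Lemma tm1_idealK_binom_rem u : u != 0 -> laurentK u -> laurentK u^-1 ->
  tm1_idealK L ((u - 1) ^+ L) -> forall m, tm1_idealK L (binom_rem u m).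
Proof.
move=> u_neq0 Ru RuV hJ.
have overflow m : tm1_idealK L (constK (binomZ m n) * (u - 1) ^+ L).
  by apply: tm1_idealKMl => //; apply: laurentK_const.
have step m : tm1_idealK L (binom_rem u m) <-> tm1_idealK L (binom_rem u (m + 1)).
  rewrite binom_remS //; split=> [h | h].
    by apply: tm1_idealKD => //; apply: tm1_idealKMl.
  rewrite -[binom_rem u m](mulKf u_neq0) -[u * _](addrK (constK (binomZ m n) * (u - 1) ^+ L)).
  by apply: tm1_idealKMl => //; apply: tm1_idealKB.
have up (k : nat) : tm1_idealK L (binom_rem u k).
  elim: k => [|k IH]; first by rewrite binom_rem0; apply: tm1_idealK0.
  have -> : (k.+1 : int) = k%:Z + 1 by rewrite intS addrC.
  exact: (step k).1 IH.
have down (k : nat) : tm1_idealK L (binom_rem u (- k%:Z)).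
  elim: k => [|k IH]; first by rewrite oppr0 binom_rem0; apply: tm1_idealK0.
  apply/step; have -> : - (k.+1 : int) + 1 = - (k : int) by rewrite intS; ring.
  exact: IH.
by case=> k; [apply: up | rewrite NegzE; apply: down].
Qed.

Lemma tm1_idealK_binom_unitriangular (d : nat -> K) :
  (forall m : nat, (m < L)%N -> tm1_idealK L (\sum_(k < L) constK (binomZ m k) * d k)) ->
  forall k, (k < L)%N -> tm1_idealK L (d k).
Proof.
move=> h; elim/ltn_ind=> k IH kL; have := h k kL.
rewrite -(big_mkord xpredT (fun i => constK (binomZ k i) * d i)).
rewrite (big_cat_nat (leq0n k.+1) kL) big_nat_recr //= binomZ_diag rmorph1 mul1r.
rewrite [X in _ + X]big1_seq ?addr0 => [hsum|i /andP[_]]; last first.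
  by rewrite mem_index_iota => /andP[ki _]; rewrite binomZ_small // rmorph0 mul0r.
 rewrite -(addKr (\sum_(0 <= i < k) constK (binomZ k i) * d i) (d k)).
apply: tm1_idealKD hsum; apply: tm1_idealKN; rewrite big_nat_cond; apply: tm1_idealK_sum.
move=> i /andP[/andP[_ ik] _]; apply: tm1_idealKMl; first exact: laurentK_const.
by apply: IH => //; apply: ltn_trans kL.
Qed.

End BinomialSeries.

Definition eK (x : loop) : K := lval (le x).
Definition fK (x : loop) : K := lval (lf x).
Definition hK (x : loop) : K := lval (lh x).
Definition eKV (x : loop) : K := lvalV (le x).
Definition fKV (x : loop) : K := lvalV (lf x).
Definition hKV (x : loop) : K := lvalV (lh x).

Lemma inOA_K x : inOA x <-> fK x = eKV x /\ hKV x = - hK x.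
Proof. by rewrite /inOA !leqv_lval lval_linv lvalN lval_linv. Qed.

Lemma fKV_inOA x : inOA x -> fKV x = eK x.
Proof. by case=> h _; rewrite /fKV (lvalV_leqv h) lvalV_linv. Qed.

Lemma loop_sum_morph (g : loop -> K) n (c : nat -> C) (F : nat -> loop) :
  (forall x y, g (loop_add x y) = g x + g y) -> g loop0 = 0 ->
  (forall c x, g (loop_scale c x) = constK c * g x) ->
  g (loop_sum n (fun k => loop_scale (c k) (F k))) = \sum_(k < n) constK (c k) * g (F k).
Proof.
move=> gD g0 gZ; rewrite /loop_sum -(big_mkord xpredT (fun k => constK (c k) * g (F k))).
rewrite /index_iota subn0; elim: (iota 0 n) => [|a s IH] /=; first by rewrite big_nil.
by rewrite gD IH big_cons gZ.
Qed.

Definition loop_coordinate (pr : loop -> laurent) : Prop :=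
  [/\ forall x y, pr (loop_add x y) = ladd (pr x) (pr y), pr loop0 = lzero
     & forall c x, pr (loop_scale c x) = lscale c (pr x)].

Lemma loop_coordinate_le : loop_coordinate le. Proof. by []. Qed.
Lemma loop_coordinate_lf : loop_coordinate lf. Proof. by []. Qed.
Lemma loop_coordinate_lh : loop_coordinate lh. Proof. by []. Qed.

Section CoordinateSums.
Variable pr : loop -> laurent.
Hypothesis pr_coord : loop_coordinate pr.
Variables (n : nat) (c : nat -> C) (F : nat -> loop).
Let S := loop_sum n (fun k => loop_scale (c k) (F k)).

Lemma lval_loop_sum : lval (pr S) = \sum_(k < n) constK (c k) * lval (pr (F k)).
Proof.
case: pr_coord => prD pr0 prZ.
by apply: (loop_sum_morph (g := lval \o pr)) => * /=; rewrite ?prD ?pr0 ?prZ ?lvalD ?lval0 ?lvalZ.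
Qed.

Lemma lvalV_loop_sum : lvalV (pr S) = \sum_(k < n) constK (c k) * lvalV (pr (F k)).
Proof.
case: pr_coord => prD pr0 prZ.
by apply: (loop_sum_morph (g := lvalV \o pr)) => * /=; rewrite ?prD ?pr0 ?prZ ?lvalVD ?lvalV0 ?lvalVZ.
Qed.

End CoordinateSums.

Lemma inOA_sum n c F : (forall k, (k < n)%N -> inOA (F k)) ->
  inOA (loop_sum n (fun k => loop_scale (c k) (F k))).
Proof.
move=> hF; apply/inOA_K; rewrite /fK /eKV /hKV /hK.
rewrite (lval_loop_sum loop_coordinate_lf) (lval_loop_sum loop_coordinate_lh).
rewrite (lvalV_loop_sum loop_coordinate_le) (lvalV_loop_sum loop_coordinate_lh) -sumrN.
split; apply: eq_bigr => k _;
  have /inOA_K [fk hk] := hF k (ltn_ord k).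
  by rewrite [lval _]fk.
by rewrite [lvalV _]hk mulrN.
Qed.

Lemma eK_sum n c F :
  eK (loop_sum n (fun k => loop_scale (c k) (F k))) = \sum_(k < n) constK (c k) * eK (F k).
Proof. by rewrite /eK (lval_loop_sum loop_coordinate_le). Qed.

Lemma hK_sum n c F :
  hK (loop_sum n (fun k => loop_scale (c k) (F k))) = \sum_(k < n) constK (c k) * hK (F k).
Proof. by rewrite /hK (lval_loop_sum loop_coordinate_lh). Qed.

Lemma eKZ c x : eK (loop_scale c x) = constK c * eK x. Proof. exact: lvalZ. Qed.
Lemma hKZ c x : hK (loop_scale c x) = constK c * hK x. Proof. exact: lvalZ. Qed.

Lemma eK_bracket x y : eK (loop_bracket x y) = constK 2 * (hK x * eK y - eK x * hK y).
Proof. by rewrite /eK /hK /= lvalZ lvalD lvalN !lvalM. Qed.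
Lemma hK_bracket x y : hK (loop_bracket x y) = eK x * fK y - fK x * eK y.
Proof. by rewrite /eK /hK /fK /= lvalD lvalN !lvalM. Qed.

Lemma inOA_scale c x : inOA x -> inOA (loop_scale c x).
Proof.
move/inOA_K=> [fx hx]; apply/inOA_K; move: fx hx.
by rewrite /fK /eKV /hKV /hK /= !lvalZ !lvalVZ => -> ->; rewrite mulrN.
Qed.

Lemma inOA_bracket x y : inOA x -> inOA y -> inOA (loop_bracket x y).
Proof.
move=> ox oy; have fx := fKV_inOA ox; have fy := fKV_inOA oy.
move/inOA_K: ox => [ex hx]; move/inOA_K: oy => [ey hy].
move: fx fy ex hx ey hy; rewrite /fKV /eK /fK /eKV /hKV /hK => fx fy ex hx ey hy.
apply/inOA_K; rewrite /fK /eKV /hKV /hK /=.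
rewrite !lvalZ !lvalVZ !lvalD !lvalVD !lvalN !lvalVN !lvalM !lvalVM.
by rewrite ex ey hx hy fx fy; split; ring.
Qed.

Lemma inOA_A m : inOA (A_ m).
Proof. by apply/inOA_K; rewrite /fK /eKV /hKV /hK /= lvalZ lvalVZ lval_mon lvalV_mon lvalV0 lval0 oppr0. Qed.

Lemma inOA_G m : inOA (G_ m).
Proof.
apply/inOA_K; rewrite /fK /eKV /hKV /hK /= lval0 lvalV0; split=> //.
by rewrite lvalD lvalVD lvalN lvalVN !lval_mon !lvalV_mon opprK opprB.
Qed.

Lemma eK_A m : eK (A_ m) = constK 2 * tX ^ m. Proof. by rewrite /eK lvalZ lval_mon. Qed.
Lemma hK_A m : hK (A_ m) = 0. Proof. exact: lval0. Qed.
Lemma eK_G m : eK (G_ m) = 0. Proof. exact: lval0. Qed.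
Lemma hK_G m : hK (G_ m) = tX ^ m - tX ^ (- m).
Proof. by rewrite /hK lvalD lvalN !lval_mon. Qed.

Lemma subrACA (V : zmodType) (a b c d : V) : (a - b) - (c - d) = (a - c) - (b - d).
Proof. by rewrite opprD addrACA -opprD. Qed.

Section Congruence.
Variable L : nat.

(* Congruence modulo I_{(t-1)^L}, read off the e- and h-coordinates; for elements
   of OA the f-coordinate is determined by the e-coordinate. *)
Definition congK (x y : loop) : Prop :=
  tm1_idealK L (eK x - eK y) /\ tm1_idealK L (hK x - hK y).

Lemma congI_K x y : inOA x -> inOA y -> congI L x y <-> congK x y.
Proof.
move=> /inOA_K [fx hx] /inOA_K [fy hy].
rewrite /congI /inI /congK /eK /hK /= !tm1_idealK_lval !lvalD !lvalN; split=> [[_ //]|hxy].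
split=> //; apply/inOA_K; move: fx hx fy hy.
rewrite /fK /eKV /hKV /hK /= !lvalD !lvalN !lvalVD !lvalVN => -> -> -> ->.
by split=> //; rewrite opprD.
Qed.

Lemma congK_eq x y : eK x = eK y -> hK x = hK y -> congK x y.
Proof. by rewrite /congK => -> ->; rewrite !subrr; split; apply: tm1_idealK0. Qed.

Lemma congK_sym x y : congK x y -> congK y x.
Proof. by case=> he hh; split; rewrite -opprB; apply: tm1_idealKN. Qed.

Lemma congK_trans y x z : congK x y -> congK y z -> congK x z.
Proof.
move=> [e1 h1] [e2 h2]; split.
  by rewrite -(subrKA (eK y)); apply: tm1_idealKD.
by rewrite -(subrKA (hK y)); apply: tm1_idealKD.
Qed.

Lemma congK_scale c x y : congK x y -> congK (loop_scale c x) (loop_scale c y).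
Proof.
case=> he hh; rewrite /congK !eKZ !hKZ -!mulrBr.
by split; apply: tm1_idealKMl => //; apply: laurentK_const.
Qed.

Lemma fK_congK x y : inOA x -> inOA y -> congK x y -> tm1_idealK L (fK x - fK y).
Proof.
move=> /inOA_K [-> _] /inOA_K [-> _] [he _].
have := @tm1_idealK_lvalV L (ladd (le x) (lopp (le y))).
by rewrite lvalD lvalN lvalVD lvalVN; apply.
Qed.

Lemma congK_bracket x x' y y' : inOA x -> inOA x' -> inOA y -> inOA y' ->
  congK x x' -> congK y y' -> congK (loop_bracket x y) (loop_bracket x' y').
Proof.
move=> ox ox' oy oy' cx cy.
have fx := fK_congK ox ox' cx; have fy := fK_congK oy oy' cy.
case: cx => ex hx; case: cy => ey hy.
(* a b - a' b' = (a - a') b + a' (b - b') *)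
have prod (a b a' b' : laurent) : tm1_idealK L (lval a - lval a') ->
    tm1_idealK L (lval b - lval b') -> tm1_idealK L (lval a * lval b - lval a' * lval b').
  move=> ha hb; rewrite -(subrKA (lval a' * lval b)) -mulrBl -mulrBr.
  apply: tm1_idealKD.
    by apply: tm1_idealKMr => //; apply: laurentK_lval.
  by apply: tm1_idealKMl => //; apply: laurentK_lval.
split; rewrite ?eK_bracket ?hK_bracket.
  rewrite -mulrBr subrACA; apply: tm1_idealKMl; first exact: laurentK_const.
  by apply: tm1_idealKB; apply: prod.
by rewrite subrACA; apply: tm1_idealKB; apply: prod.
Qed.

End Congruence.

Definition X_ (k : nat) : loop := Loop (lscale 2 (tm1 k)) (linv (lscale 2 (tm1 k))) lzero.
Definition Y_ (k : nat) : loop :=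
  Loop lzero lzero (lscale ((-1) ^+ k) (ladd (tm1 k) (lopp (linv (tm1 k))))).

Lemma eK_X k : eK (X_ k) = constK 2 * (tX - 1) ^+ k.
Proof. by rewrite /eK lvalZ lval_tm1. Qed.
Lemma fK_X k : fK (X_ k) = constK 2 * (tX^-1 - 1) ^+ k.
Proof. by rewrite /fK lval_linv lvalVZ lvalV_tm1. Qed.
Lemma hK_X k : hK (X_ k) = 0.
Proof. exact: lval0. Qed.
Lemma eK_Y k : eK (Y_ k) = 0.
Proof. exact: lval0. Qed.
Lemma hK_Y k : hK (Y_ k) = constK ((-1) ^+ k) * ((tX - 1) ^+ k - (tX^-1 - 1) ^+ k).
Proof. by rewrite /hK lvalZ lvalD lvalN lval_linv lval_tm1 lvalV_tm1. Qed.

Lemma inOA_X k : inOA (X_ k).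
Proof. by apply/inOA_K; rewrite /fK /eKV /hKV /hK /= lval_linv lvalV0 lval0 oppr0. Qed.
Lemma inOA_Y k : inOA (Y_ k).
Proof.
apply/inOA_K; rewrite /fK /eKV /hKV /hK /= lval0 lvalV0; split=> //.
by rewrite lvalZ lvalVZ lvalD lvalVD lvalN lvalVN lval_linv lvalV_linv -opprB mulrN.
Qed.

Section Expansion.
Variable n : nat.
Local Notation L := n.+1.

Lemma tm1_idealK_binom_rem_tX m : tm1_idealK L (binom_rem n tX m).
Proof.
apply: tm1_idealK_binom_rem; [exact: tX_neq0 | exact: laurentK_tX | exact: laurentK_tXV |].
exact: tm1_idealK_gen.
Qed.

Lemma tm1_idealK_binom_rem_tXV m : tm1_idealK L (binom_rem n tX^-1 m).
Proof.
apply: tm1_idealK_binom_rem; [exact: invr_neq0 tX_neq0 | exact: laurentK_tXV | |].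
  by rewrite invrK; apply: laurentK_tX.
exact: tm1_idealK_genV.
Qed.

Lemma congK_A_X m : congK L (A_ m) (loop_sum L (fun k => loop_scale (binomZ m k) (X_ k))).
Proof.
split; rewrite ?eK_sum ?hK_sum.
  have -> : eK (A_ m) - \sum_(k < L) constK (binomZ m k) * eK (X_ k) = constK 2 * binom_rem n tX m.
    rewrite /binom_rem /binom_series mulrBr mulr_sumr eK_A; congr (_ - _).
    by apply: eq_bigr => k _; rewrite eK_X mulrCA.
  by apply: tm1_idealKMl (tm1_idealK_binom_rem_tX m); apply: laurentK_const.
rewrite hK_A big1 ?subr0; first exact: tm1_idealK0.
by move=> k _; rewrite hK_X mulr0.
Qed.

Lemma congK_G_Y m :
  congK L (G_ m) (loop_sum L (fun k => loop_scale ((-1) ^+ k * binomZ m k) (Y_ k))).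
Proof.
split; rewrite ?eK_sum ?hK_sum.
  rewrite eK_G big1 ?subr0; first exact: tm1_idealK0.
  by move=> k _; rewrite eK_Y mulr0.
have -> : hK (G_ m) - \sum_(k < L) constK ((-1) ^+ k * binomZ m k) * hK (Y_ k)
    = binom_rem n tX m - binom_rem n tX^-1 m.
  rewrite /binom_rem /binom_series hK_G -exprz_inv [RHS]subrACA -sumrB.
  congr (_ - _); apply: eq_bigr => k _.
  by rewrite hK_Y rmorphM mulrACA -rmorphM -expr2 sqrr_sign rmorph1 mul1r mulrBr.
by apply: tm1_idealKB; [apply: tm1_idealK_binom_rem_tX | apply: tm1_idealK_binom_rem_tXV].
Qed.

Lemma expansion_X_Y : expansion L X_ Y_.
Proof.
split=> [k _ | m]; first by split; [apply: inOA_X | apply: inOA_Y].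
split; apply/congI_K.
- exact: inOA_A.
- by apply: inOA_sum => k _; apply: inOA_X.
- exact: congK_A_X.
- exact: inOA_G.
- by apply: inOA_sum => k _; apply: inOA_Y.
- exact: congK_G_Y.
Qed.

Lemma tm1_idealK_signed_binom_unique (s : nat -> C) (d : nat -> K) :
  (forall k, s k * s k = 1) ->
  (forall m : nat, (m < L)%N ->
     tm1_idealK L (\sum_(k < L) constK (s k * binomZ m k) * d k)) ->
  forall k, (k < L)%N -> tm1_idealK L (d k).
Proof.
move=> s_sqr hd k kL.
have -> : d k = constK (s k) * (constK (s k) * d k) by rewrite mulrA -rmorphM s_sqr rmorph1 mul1r.
apply: tm1_idealKMl; first exact: laurentK_const.
apply: (@tm1_idealK_binom_unitriangular n (fun j => constK (s j) * d j) _ k kL) => m mL.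
have := hd m mL; congr (tm1_idealK L _); apply: eq_bigr => j _.
by rewrite rmorphM mulrCA mulrA.
Qed.

Lemma congK_loop_sum_unique (s : nat -> C) (c : int -> nat -> C) (Z Z' : nat -> loop) :
  (forall k, s k * s k = 1) -> (forall m k, c m k = s k * binomZ m k) ->
  (forall m, congK L (loop_sum L (fun k => loop_scale (c m k) (Z k)))
                     (loop_sum L (fun k => loop_scale (c m k) (Z' k)))) ->
  forall k, (k < L)%N -> congK L (Z k) (Z' k).
Proof.
move=> s_sqr cE hZ k kL; split.
  apply: (tm1_idealK_signed_binom_unique (d := fun j => eK (Z j) - eK (Z' j)) s_sqr _ kL).
  move=> m _; case: (hZ m); rewrite !eK_sum -sumrB => + _; congr (tm1_idealK L _).
  by apply: eq_bigr => j _; rewrite cE mulrBr.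
apply: (tm1_idealK_signed_binom_unique (d := fun j => hK (Z j) - hK (Z' j)) s_sqr _ kL).
move=> m _; case: (hZ m); rewrite !hK_sum -sumrB => _; congr (tm1_idealK L _).
by apply: eq_bigr => j _; rewrite cE mulrBr.
Qed.

Lemma expansion_congK X Y : expansion L X Y -> forall m,
  congK L (A_ m) (loop_sum L (fun k => loop_scale (binomZ m k) (X k))) /\
  congK L (G_ m) (loop_sum L (fun k => loop_scale ((-1) ^+ k * binomZ m k) (Y k))).
Proof.
move=> [oXY hXY] m; have [cA cG] := hXY m.
split; [move/congI_K: cA | move/congI_K: cG]; apply.
- exact: inOA_A.
- by apply: inOA_sum => k /oXY [].
- exact: inOA_G.
- by apply: inOA_sum => k /oXY [].
Qed.

Lemma expansion_congK_unique X Y X' Y' : expansion L X Y -> expansion L X' Y' ->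
  forall k, (k < L)%N -> congK L (X k) (X' k) /\ congK L (Y k) (Y' k).
Proof.
move=> EXY EXY' k kL; split.
  apply: (congK_loop_sum_unique (s := fun=> 1) (c := binomZ)) kL => [j | m j | m].
  - by rewrite mulr1.
  - by rewrite mul1r.
  - exact: congK_trans (congK_sym (expansion_congK EXY m).1) (expansion_congK EXY' m).1.
apply: (congK_loop_sum_unique (s := fun j => (-1) ^+ j)) kL => [j | m j | m] //.
- by rewrite -expr2 sqrr_sign.
- exact: congK_trans (congK_sym (expansion_congK EXY m).2) (expansion_congK EXY' m).2.
Qed.

End Expansion.

Lemma congK_Y_bracket L k :
  congK L (Y_ k) (loop_scale ((-1) ^+ k / 4) (loop_bracket (X_ k) (X_ 0))).
Proof.
apply: congK_eq; first by rewrite eKZ eK_bracket eK_Y !hK_X mul0r mulr0 subrr !mulr0.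
have sign_div4 : (-1) ^+ k / 4 * 2 * 2 = ((-1) ^+ k : C).
  by rewrite -mulrA -natrM divfK // (natC_neq0 3).
rewrite hKZ hK_bracket hK_Y !eK_X !fK_X !expr0 !mulr1 -{1}sign_div4 !rmorphM.
ring.
Qed.

Theorem lemma6 (L : nat) (hL : (1 <= L)%N) :
  (exists X Y : nat -> loop, expansion L X Y) /\
  (forall X Y X' Y' : nat -> loop, expansion L X Y -> expansion L X' Y' ->
     forall k, (k < L)%N -> congI L (X k) (X' k) /\ congI L (Y k) (Y' k)) /\
  (forall X Y : nat -> loop, expansion L X Y ->
     forall k, (k < L)%N ->
       congI L (Y k) (loop_scale ((-1) ^+ k / 4) (loop_bracket (X k) (X 0%N)))).
Proof.
case: L hL => // n _; split; first by exists X_, Y_; apply: expansion_X_Y.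
split=> [X Y X' Y' EXY EXY' k kL | X Y EXY k kL].
  have [[oXk oYk] [oXk' oYk']] := (EXY.1 k kL, EXY'.1 k kL).
  have [cX cY] := expansion_congK_unique EXY EXY' kL.
  by split; apply/congI_K.
have [oXk oYk] := EXY.1 k kL; have [oX0 _] := EXY.1 0%N (ltn0Sn n).
have [cXk cYk] := expansion_congK_unique EXY (expansion_X_Y n) kL.
have [cX0 _] := expansion_congK_unique EXY (expansion_X_Y n) (ltn0Sn n).
apply/congI_K => //; first by apply/inOA_scale/inOA_bracket.
apply: congK_trans cYk _; apply: congK_trans (congK_Y_bracket _ k) _.
apply: congK_scale; apply: congK_bracket => //; try exact: inOA_X; exact: congK_sym.
Qed.
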